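(* Let $X$ be a topological space, let $Y$ be a Urysohn space, let $S$ be a dense subset of $X$ and let $f:S\to Y$ be a $\theta$-continuous map. Then the following are equivalent: (1) $f$ has a $\theta$-continuous extension to $X$; (2) both of the following hold: $(+)$ for every family $\{A_\beta\}$ of subsets of $Y$ with $\bigcap_\beta \mathrm{cl}_\theta A_\beta=\emptyset$ one has $\bigcap_\beta\overline{f^{-1}(A_\beta)}=\emptyset$ (closures in $X$); and $(++)$ for every open set $W$ of $Y$ there is an open set $V$ of $X$ with $X_\theta(f^{-1}(W))\subseteq V\subseteq X_\theta(f^{-1}(\overline W))$.
   Context: A Urysohn space is one in which any two distinct points have open neighborhoods with disjoint closures. A map $g:T\to Y$ is $\theta$-continuous if for every $t\in T$ and every open neighborhood $U$ of $g(t)$ there is a neighborhood $W$ of $t$ with $g(W)\subseteq\overline U$ (for $f:S\to Y$, $S$ carries the subspace topology). For $M\subseteq Y$, $\mathrm{cl}_\theta M$ is the set of $y\in Y$ with $\mathrm{cl}\,U\cap M\neq\emptyset$ for every open $U\ni y$. $\mathcal N(x)$ is the set of open neighborhoods of $x$ in $X$. For $V\subseteq Y$, $X_\theta(f^{-1}(V))$ is the set of points $x\in X$ with $\bigcap\{\mathrm{cl}_\theta f(P\cap S):P\in\mathcal N(x)\}\subseteq V$. *)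

From mathcomp Require Import all_boot all_classical topology.
Set Implicit Arguments. Unset Strict Implicit. Unset Printing Implicit Defensive.
Local Open Scope classical_set_scope.

Definition urysohn (Y : topologicalType) : Prop :=
  forall y1 y2 : Y, y1 <> y2 ->
    exists U V : set Y, [/\ open U, open V, U y1, V y2 &
                           closure U `&` closure V = set0].

Definition cl_theta (Y : topologicalType) (M : set Y) : set Y :=
  [set y | forall U : set Y, open U -> U y -> closure U `&` M !=set0].

Definition theta_continuous (X Y : topologicalType) (g : X -> Y) : Prop :=
  forall (t : X) (U : set Y), open U -> U (g t) ->
    exists W : set X, [/\ open W, W t & g @` W `<=` closure U].

(* theta-continuity of f restricted to S (S carries the subspace topology:
   its open neighbourhoods of t are the W `&` S with W open in X, W t) *)
Definition theta_continuous_on (X Y : topologicalType) (S : set X) (f : X -> Y) : Prop :=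
  forall (t : X) (U : set Y), S t -> open U -> U (f t) ->
    exists W : set X, [/\ open W, W t & f @` (W `&` S) `<=` closure U].

(* X_theta(f^{-1}(V)) *)
Definition Xtheta (X Y : topologicalType) (S : set X) (f : X -> Y) (V : set Y) : set X :=
  [set x | \bigcap_(P in [set P : set X | open P /\ P x])
              cl_theta (f @` (P `&` S)) `<=` V].

From mathcomp Require Import all_boot all_classical topology.
Set Implicit Arguments. Unset Strict Implicit. Unset Printing Implicit Defensive.
Local Open Scope classical_set_scope.

(** The points y with [closure U `&` f @` (P `&` S) !=set0] for all open
    neighbourhoods P of x and U of y, the theta-limits of f at x, form the set
    whose inclusion in V defines [Xtheta S f V x].  If g is a theta-continuous
    extension of f, density of S makes g x a theta-limit at x and the Urysohn
    property makes it the only one, from which (+) and (++) follow.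
    Conversely, (+) applied to the family of images f(P ∩ S) shows that
    theta-limits exist, and applied to the closures of the neighbourhoods of
    two distinct theta-limits shows that they are unique; the resulting
    function extends f, and (++) is exactly its theta-continuity. *)

Lemma closure_openP (T : topologicalType) (A : set T) (x : T) :
  closure A x <-> (forall B, open B -> B x -> A `&` B !=set0).
Proof.
split=> [Ax B oB Bx|AB B]; first by apply: Ax; apply: open_nbhs_nbhs.
rewrite nbhsE => -[C [oC Cx] CB].
have [z [Az Cz]] := AB C oC Cx; exists z; split => //; exact: CB.
Qed.

Lemma urysohn_not_cl_theta (Y : topologicalType) (y z : Y) :
  urysohn Y -> z <> y -> exists U, [/\ open U, U y & ~ cl_theta (closure U) z].
Proof.
move=> uY zy; have [O [U [oO oU Oz Uy OU]]] := uY z y zy.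
exists U; split => // zU; have [w wOU] := zU O oO Oz.
by rewrite OU in wOU.
Qed.

Section ThetaLimits.
Variables (X Y : topologicalType) (S : set X) (f : X -> Y).

Definition theta_limits (x : X) : set Y :=
  \bigcap_(P in [set P : set X | open P /\ P x]) cl_theta (f @` (P `&` S)).

Lemma XthetaE (V : set Y) : Xtheta S f V = [set x | theta_limits x `<=` V].
Proof. by []. Qed.

Definition preimage_closures_disjoint : Prop :=
  forall (I : Type) (A : I -> set Y),
    \bigcap_(i in [set: I]) cl_theta (A i) = set0 ->
    \bigcap_(i in [set: I]) closure (S `&` f @^-1` A i) = set0.

Definition Xtheta_interpolated : Prop :=
  forall W : set Y, open W ->
    exists V : set X,
      [/\ open V, Xtheta S f W `<=` V & V `<=` Xtheta S f (closure W)].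

Lemma closure_preimageP (A : set Y) (x : X) :
  closure (S `&` f @^-1` A) x <->
  (forall Q, open Q -> Q x -> A `&` f @` (Q `&` S) !=set0).
Proof.
rewrite closure_openP; split=> [SA Q oQ Qx|AQ Q oQ Qx].
  by have [s [[Ss As] Qs]] := SA Q oQ Qx; exists (f s); split => //; exists s.
by have [w [Aw [s [Qs Ss] fsw]]] := AQ Q oQ Qx; exists s; rewrite /= fsw.
Qed.

Lemma theta_limitsP (x : X) (y : Y) :
  theta_limits x y <->
  (forall U, open U -> U y -> closure (S `&` f @^-1` closure U) x).
Proof.
split=> [xy U oU Uy|xU P [oP Px] U oU Uy].
  by apply/closure_preimageP => Q oQ Qx; exact: xy.
exact: (closure_preimageP _ _).1 (xU U oU Uy) P oP Px.
Qed.

Section Extension.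
Variable g : X -> Y.
Hypotheses (gc : theta_continuous g) (gS : forall s, S s -> g s = f s).

Lemma theta_continuous_closure_preimage (A : set Y) (x : X) :
  closure (S `&` f @^-1` A) x -> cl_theta A (g x).
Proof.
move=> /closure_preimageP xA U oU Ugx.
have [W [oW Wx gW]] := gc oU Ugx.
have [w [Aw [s [Ws Ss] fsw]]] := xA W oW Wx.
by exists w; split => //; rewrite -fsw -gS //; apply: gW; exists s.
Qed.

Lemma theta_limits_extension : urysohn Y -> dense S ->
  forall x, theta_limits x = [set g x].
Proof.
move=> uY dS x; apply/seteqP; split=> [y xy|_ ->].
  apply/not_notP => ygx; have [U [U' [oU oU' Uy Ugx UU']]] := uY y (g x) ygx.
  have [P [oP Px gP]] := gc oU' Ugx.
  have [w [Uw [s [Ps Ss] fsw]]] := xy P (conj oP Px) U oU Uy.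
  have : (closure U `&` closure U') w.
    by split => //; apply: gP; exists s => //; rewrite gS.
  by rewrite UU'.
apply/theta_limitsP => U oU Ugx; apply/closure_preimageP => Q oQ Qx.
have [W [oW Wx gW]] := gc oU Ugx.
have [s [[Ws Qs] Ss]] : (W `&` Q) `&` S !=set0.
  by apply: dS; [exists x | exact: openI].
exists (f s); split; last by exists s.
by rewrite -gS //; apply: gW; exists s.
Qed.

Lemma extension_preimage_closures_disjoint : preimage_closures_disjoint.
Proof.
move=> I A A0; apply/seteqP; split => // x xA.
have : (\bigcap_(i in [set: I]) cl_theta (A i)) (g x).
  by move=> i _; apply: theta_continuous_closure_preimage; exact: xA.
by rewrite A0.
Qed.

Lemma extension_Xtheta_interpolated : urysohn Y -> dense S -> Xtheta_interpolated.
Proof.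
move=> uY dS W oW.
have gXthetaE V : Xtheta S f V = g @^-1` V.
  apply/seteqP; split=> x; rewrite XthetaE /= theta_limits_extension //.
    by apply.
  by move=> Vgx _ ->.
exists (\bigcup_(P in [set P | open P /\ g @` P `<=` closure W]) P).
rewrite !gXthetaE; split.
- by apply: bigcup_open => P [].
- by move=> x Wgx; have [P [oP Px gP]] := gc oW Wgx; exists P.
- by move=> z [P [_ gP] Pz]; apply: gP; exists z.
Qed.

End Extension.

Section Construction.
Hypotheses (uY : urysohn Y) (dS : dense S) (fA : preimage_closures_disjoint).

Lemma theta_limits_nonempty (x : X) : theta_limits x !=set0.
Proof.
apply/not_notP => x0.
pose N := {P : set X | open P /\ P x}.
have A0 : \bigcap_(P in [set: N]) cl_theta (f @` (sval P `&` S)) = set0.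
  apply/seteqP; split => // y Iy; apply: x0; exists y => P oPx.
  exact: Iy (exist _ P oPx) I.
have : (\bigcap_(P in [set: N]) closure (S `&` f @^-1` (f @` (sval P `&` S)))) x.
  move=> [P [oP Px]] _; apply/closure_preimageP => Q oQ Qx /=.
  have [s [[Ps Qs] Ss]] : (P `&` Q) `&` S !=set0.
    by apply: dS; [exists x | exact: openI].
  by exists (f s); split; exists s.
by rewrite (fA A0).
Qed.

Lemma theta_limits_subsingleton (x : X) (y1 y2 : Y) :
  theta_limits x y1 -> theta_limits x y2 -> y1 = y2.
Proof.
move=> /theta_limitsP xy1 /theta_limitsP xy2; apply/not_notP => y12.
pose N := {U : set Y | open U /\ (U y1 \/ U y2)}.
have A0 : \bigcap_(U in [set: N]) cl_theta (closure (sval U)) = set0.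
  apply/seteqP; split => // z zI.
  have [zy1|zy1] := pselect (z = y1).
    have zy2 : z <> y2 by rewrite zy1.
    have [U [oU Uy2 zU]] := urysohn_not_cl_theta uY zy2.
    by apply: zU; exact: zI (exist _ U (conj oU (or_intror Uy2))) I.
  have [U [oU Uy1 zU]] := urysohn_not_cl_theta uY zy1.
  by apply: zU; exact: zI (exist _ U (conj oU (or_introl Uy1))) I.
have : (\bigcap_(U in [set: N]) closure (S `&` f @^-1` closure (sval U))) x.
  by move=> [U [oU [Uy1|Uy2]]] _ /=; [exact: xy1 | exact: xy2].
by rewrite (fA A0).
Qed.

Lemma theta_continuous_extension_exists : Xtheta_interpolated ->
  exists g : X -> Y, theta_continuous g /\ (forall s, S s -> g s = f s).
Proof.
move=> Vint; pose g x := xget (f x) (theta_limits x).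
have gx x : theta_limits x (g x) by apply: xgetPex; exact: theta_limits_nonempty.
have gXtheta V x : Xtheta S f V x <-> V (g x).
  split=> [|Vgx y xy]; first by apply; exact: gx.
  by rewrite (theta_limits_subsingleton xy (gx x)).
exists g; split=> [t U oU Ugt|s Ss].
  have [V [oV WV VW]] := Vint U oU.
  exists V; split => //; first by apply: WV; exact/gXtheta.
  by move=> _ [z Vz <-]; exact/gXtheta/VW.
apply: theta_limits_subsingleton (gx s) _ => P [oP Ps] U oU Ufs.
by exists (f s); split; [exact: subset_closure | exists s].
Qed.

End Construction.
End ThetaLimits.

Theorem corollary4p3 (X Y : topologicalType) (S : set X) (f : X -> Y) :
  urysohn Y -> dense S -> theta_continuous_on S f ->
  (exists g : X -> Y, theta_continuous g /\ (forall s, S s -> g s = f s)) <->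
  ((forall (I : Type) (A : I -> set Y),
       \bigcap_(i in [set: I]) cl_theta (A i) = set0 ->
       \bigcap_(i in [set: I]) closure (S `&` f @^-1` A i) = set0) /\
   (forall W : set Y, open W ->
       exists V : set X, [/\ open V, Xtheta S f W `<=` V &
                             V `<=` Xtheta S f (closure W)])).
Proof.
move=> uY dS _; split=> [[g [gc gS]]|[fA Vint]].
  split; first exact: extension_preimage_closures_disjoint gS.
  exact: extension_Xtheta_interpolated gc gS uY dS.
exact: theta_continuous_extension_exists.
Qed.
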